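(* Suppose Assumption A holds with $\beta,\gamma\in(0,\infty)$, fix $\mu>0$ and $\sigma\in\mathcal X$, and let $\pi^{\mu,\sigma}$ be a perturbed equilibrium. Run MD-SP with full feedback and constant learning rate $$\eta\in\Big(0,\frac{2\mu\gamma\rho^2}{\mu^2\gamma\rho^2(\gamma+2\beta)+8L^2}\Big).$$ Then for every initial profile $\pi^0\in\mathcal X$ and every $t\ge1$, $$D_\psi(\pi^{\mu,\sigma},\pi^t)\le D_\psi(\pi^{\mu,\sigma},\pi^0)\Big(1-\frac{\eta\mu\gamma}{2}\Big)^t.$$
   Context: Game. Let $N\ge1$. For each $i\in[N]$, $\mathcal X_i\subseteq\mathbb R^{d_i}$ is a nonempty compact convex set, and $\mathcal X=\prod_i\mathcal X_i$. Each $v_i:\mathcal X\to\mathbb R$ is differentiable, with block gradient $\nabla_{\pi_i}v_i$. The norm is Euclidean, with $\|\pi\|^2=\sum_i\|\pi_i\|^2$. The game is monotone: $\sum_i\langle\nabla_{\pi_i}v_i(\pi)-\nabla_{\pi_i}v_i(\pi'),\pi_i-\pi_i'\rangle\le0$. The game is $L$-smooth: $\sum_i\|\nabla_{\pi_i}v_i(\pi)-\nabla_{\pi_i}v_i(\pi')\|^2\le L^2\|\pi-\pi'\|^2$. Regularizer. $\psi:\mathcal X_i\to\mathbb R$ is differentiable on $\mathcal X_i$ and $\rho$-strongly convex with respect to $\|\cdot\|$ ($\rho>0$). Bregman divergence: $D_\psi(x,y)=\psi(x)-\psi(y)-\langle\nabla\psi(y),x-y\rangle$, and $D_\psi(\pi,\pi')=\sum_iD_\psi(\pi_i,\pi_i')$.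 Perturbation. $G:\mathcal X_i\times\mathcal X_i\to[0,\infty)$ is differentiable in its first argument, with gradient $\nabla_{\pi_i}G$ in that argument. $G(\cdot,\sigma_i)$ is strictly convex with minimum value $0$ at $\sigma_i$. For $\mu>0$ and $\sigma\in\mathcal X$, $\pi^{\mu,\sigma}$ is a profile with $\pi_i^{\mu,\sigma}\in\arg\max_{\pi_i}\{v_i(\pi_i,\pi^{\mu,\sigma}_{-i})-\mu G(\pi_i,\sigma_i)\}$ for all $i$. Assumption A: for all $\sigma_i,\pi_i,\pi_i'\in\mathcal X_i$, $$\gamma D_\psi(\pi_i',\pi_i)\le G(\pi_i',\sigma_i)-G(\pi_i,\sigma_i)-\langle\nabla_{\pi_i}G(\pi_i,\sigma_i),\pi_i'-\pi_i\rangle\le\beta D_\psi(\pi_i',\pi_i).$$ MD-SP with full feedback: $$\pi_i^{t+1}=\arg\max_{x\in\mathcal X_i}\{\eta_t\langle\nabla_{\pi_i}v_i(\pi^t)-\mu\nabla_{\pi_i}G(\pi_i^t,\sigma_i),x\rangle-D_\psi(x,\pi_i^t)\}.$$ *)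

From HB Require Import structures.
From mathcomp Require Import all_boot all_order all_algebra.
From mathcomp Require Import all_classical all_reals all_analysis.
Set Implicit Arguments. Unset Strict Implicit. Unset Printing Implicit Defensive.
Import Order.TTheory GRing.Theory Num.Theory.
Local Open Scope ring_scope.
Local Open Scope classical_set_scope.

Section Defs.
Context {R : realType}.

Definition dotv {n} (u w : 'rV[R]_n) : R := \sum_(j < n) u 0 j * w 0 j.
Definition sqnorm {n} (u : 'rV[R]_n) : R := dotv u u.
Definition enorm {n} (u : 'rV[R]_n) : R := Num.sqrt (sqnorm u).

Definition convexS {n} (S : set 'rV[R]_n) : Prop :=
  forall x y, S x -> S y -> forall l : R, 0 <= l <= 1 -> S (l *: x + (1 - l) *: y).

Definition compactS {n} (S : set 'rV[R]_n) : Prop :=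
  @compact ('rV[R]_n : normedModType R) S.

Definition has_grad_within {n} (S : set 'rV[R]_n) (f : 'rV[R]_n -> R)
    (g : 'rV[R]_n) (x : 'rV[R]_n) : Prop :=
  forall eps : R, 0 < eps -> exists2 delta : R, 0 < delta &
    forall y, S y -> enorm (y - x) < delta ->
      `| f y - f x - dotv g (y - x) | <= eps * enorm (y - x).

Definition strongly_convex_on {n} (S : set 'rV[R]_n) (f : 'rV[R]_n -> R) (rho : R) : Prop :=
  forall x y, S x -> S y -> forall l : R, 0 <= l <= 1 ->
    f (l *: x + (1 - l) *: y) <=
      l * f x + (1 - l) * f y - rho / 2 * l * (1 - l) * sqnorm (x - y).

Definition strictly_convex_on {n} (S : set 'rV[R]_n) (f : 'rV[R]_n -> R) : Prop :=
  forall x y, S x -> S y -> x != y -> forall l : R, 0 < l < 1 ->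
    f (l *: x + (1 - l) *: y) < l * f x + (1 - l) * f y.

Definition bregman {n} (psi : 'rV[R]_n -> R) (gpsi : 'rV[R]_n -> 'rV[R]_n)
    (x y : 'rV[R]_n) : R :=
  psi x - psi y - dotv (gpsi y) (x - y).

Definition is_maximizer {n} (S : set 'rV[R]_n) (f : 'rV[R]_n -> R) (x : 'rV[R]_n) : Prop :=
  S x /\ forall y, S y -> f y <= f x.

Definition profile (N : nat) (d : 'I_N -> nat) := forall i : 'I_N, 'rV[R]_(d i).

Definition in_profile {N} {d : 'I_N -> nat} (X : forall i, set 'rV[R]_(d i))
    (p : profile d) : Prop := forall i, X i (p i).

Definition upd {N} {d : 'I_N -> nat} (p : profile d) (i : 'I_N) (x : 'rV[R]_(d i))
  : profile d := @dfwith 'I_N (fun j => 'rV[R]_(d j)) p i x.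

Definition bregman_prof {N} {d : 'I_N -> nat}
    (psi : forall i, 'rV[R]_(d i) -> R) (gpsi : forall i, 'rV[R]_(d i) -> 'rV[R]_(d i))
    (p q : profile d) : R :=
  \sum_(i < N) bregman (psi i) (gpsi i) (p i) (q i).

End Defs.
Arguments upd {R N d} p i x.

(* Write D for the Bregman divergence of psi, pi* for the perturbed
   equilibrium and g^t_i = grad_i v_i(pi^t) - mu grad G(pi^t_i, sigma_i).
   The proof shows the one-step contraction
       D(pi*, pi^{t+1}) <= (1 - eta mu gamma / 2) D(pi*, pi^t)
   and iterates it.  For one step and one player i:
   - first-order optimality turns the maximizers defining pi^{t+1}_i and
     pi*_i into variational inequalities;
   - the three-point identity of Bregman divergences and Assumption A turn
     them into a per-player descent inequality;
   - summing over players, monotonicity kills one coupling term, and the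
     other one is bounded by Young's inequality, L-smoothness and the
     bound D(x, y) >= rho/2 |x - y|^2 coming from strong convexity of psi;
   - the choice of the learning rate makes the resulting scalar inequality
     a contraction. *)
From HB Require Import structures.
From mathcomp Require Import all_boot all_order all_algebra.
From mathcomp Require Import all_classical all_reals all_analysis.
From mathcomp Require Import ring lra.
Import Order.TTheory GRing.Theory Num.Theory.
Local Open Scope ring_scope.
Local Open Scope classical_set_scope.

Section EuclideanSpace.
Context {R : realType} {n : nat}.
Implicit Types (u w z x y : 'rV[R]_n) (a l : R).

Lemma dotvC u w : dotv u w = dotv w u.
Proof. by apply: eq_bigr => j _; rewrite mulrC. Qed.

Lemma dotvDl u z w : dotv (u + z) w = dotv u w + dotv z w.
Proof. by rewrite /dotv -big_split; apply: eq_bigr => j _; rewrite mxE mulrDl. Qed.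

Lemma dotvZl a u w : dotv (a *: u) w = a * dotv u w.
Proof. by rewrite /dotv mulr_sumr; apply: eq_bigr => j _; rewrite mxE mulrA. Qed.

Lemma dotvNl u w : dotv (- u) w = - dotv u w.
Proof. by rewrite -scaleN1r dotvZl mulN1r. Qed.

Lemma dotvBl u z w : dotv (u - z) w = dotv u w - dotv z w.
Proof. by rewrite dotvDl dotvNl. Qed.

Lemma dotvDr u w z : dotv u (w + z) = dotv u w + dotv u z.
Proof. by rewrite dotvC dotvDl !(dotvC u). Qed.

Lemma dotvZr a u w : dotv u (a *: w) = a * dotv u w.
Proof. by rewrite dotvC dotvZl dotvC. Qed.

Lemma dotvNr u w : dotv u (- w) = - dotv u w.
Proof. by rewrite dotvC dotvNl dotvC. Qed.

Lemma dotvBr u w z : dotv u (w - z) = dotv u w - dotv u z.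
Proof. by rewrite dotvDr dotvNr. Qed.

Definition dotvE :=
  (dotvBl, dotvDl, dotvZl, dotvNl, dotvBr, dotvDr, dotvZr, dotvNr).

Lemma sqnorm_ge0 u : 0 <= sqnorm u.
Proof. by apply: sumr_ge0 => j _; exact: sqr_ge0. Qed.

Lemma sqnormBC x y : sqnorm (x - y) = sqnorm (y - x).
Proof. by rewrite -opprB /sqnorm dotvNl dotvNr opprK. Qed.

Lemma enorm_ge0 u : 0 <= enorm u.
Proof. exact: sqrtr_ge0. Qed.

Lemma enormZ l u : 0 <= l -> enorm (l *: u) = l * enorm u.
Proof.
move=> l0; rewrite /enorm /sqnorm dotvZl dotvZr mulrA -expr2.
by rewrite sqrtrM ?sqr_ge0 // sqrtr_sqr ger0_norm.
Qed.

Lemma young_dotv (P Q : R) u w :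
  2 * P * Q * dotv u w <= P ^+ 2 * sqnorm u + Q ^+ 2 * sqnorm w.
Proof.
have := sqnorm_ge0 (P *: u - Q *: w).
by rewrite /sqnorm !dotvE (dotvC w u); lra.
Qed.

Lemma convex_comb_subr l x y : l *: x + (1 - l) *: y - y = l *: (x - y).
Proof. by rewrite scalerBl scale1r scalerBr addrA addrAC addrK. Qed.

Lemma bregman_three_point (psi : 'rV[R]_n -> R) (gpsi : 'rV[R]_n -> 'rV[R]_n) x p q :
  bregman psi gpsi x q =
  bregman psi gpsi x p - bregman psi gpsi q p + dotv (gpsi p - gpsi q) (x - q).
Proof. by rewrite /bregman !dotvE; lra. Qed.

End EuclideanSpace.

Section Calculus.
Context {R : realType} {n : nat}.
Implicit Types (S : set 'rV[R]_n) (f : 'rV[R]_n -> R) (g x y z : 'rV[R]_n).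

Lemma small_step_in_ball (l delta nh : R) :
  0 < delta -> 0 <= nh -> l <= delta / (nh + 1) -> l * nh < delta.
Proof.
move=> d0 nh0 hl.
have : l * nh <= delta / (nh + 1) * nh by rewrite ler_wpM2r.
move/le_lt_trans; apply.
by rewrite mulrAC ltr_pdivrMr ?ltr_pwDr //; lra.
Qed.

Lemma maximizer_first_order S f g x :
  convexS S -> is_maximizer S f x -> has_grad_within S f g x ->
  forall z, S z -> dotv g (z - x) <= 0.
Proof.
move=> cS [Sx xmax] hg z Sz; rewrite leNgt; apply/negP => A0.
set A := dotv g (z - x) in A0; set nh := enorm (z - x).
have nh0 : 0 <= nh by exact: enorm_ge0.
have e0 : 0 < A / (nh + 1) by rewrite divr_gt0 // ltr_pwDr.
have [delta d0 hd] := hg _ e0.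
set l := Num.min 1 (delta / (nh + 1)).
have l0 : 0 < l by rewrite lt_min ltr01 divr_gt0 // ltr_pwDr.
have l01 : 0 <= l <= 1 by rewrite ltW //= ge_min lexx.
have Sy := cS z x Sz Sx l l01.
have in_ball : l * nh < delta by apply: small_step_in_ball; rewrite // ge_min lexx orbT.
have := hd _ Sy; rewrite convex_comb_subr (enormZ _ _ (ltW l0)) dotvZr -/A -/nh.
move=> /(_ in_ball); rewrite ler_norml => /andP[+ _].
have := xmax _ Sy.
have : A / (nh + 1) * (l * nh) < l * A.
  rewrite mulrCA ltr_pM2l // mulrAC ltr_pdivrMr ?ltr_pwDr // ltr_pM2l //; lra.
lra.
Qed.

Lemma grad_affine_sub S f g x (h : 'rV[R]_n -> R) (c : R) (a : 'rV[R]_n) :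
  has_grad_within S f g x -> (forall y, h y = c - f y + dotv a y) ->
  has_grad_within S h (a - g) x.
Proof.
move=> hg hh e e0; have [delta d0 hd] := hg e e0; exists delta => // y Sy hy.
rewrite !hh dotvBl.
have -> : c - f y + dotv a y - (c - f x + dotv a x) - (dotv a (y - x) - dotv g (y - x))
  = - (f y - f x - dotv g (y - x)) by rewrite dotvBr; lra.
by rewrite normrN; apply: hd.
Qed.

Lemma grad_sub_scale S f1 f2 g1 g2 x (m : R) :
  has_grad_within S f1 g1 x -> has_grad_within S f2 g2 x ->
  has_grad_within S (fun y => f1 y - m * f2 y) (g1 - m *: g2) x.
Proof.
move=> h1 h2 e e0.
have m1 : 0 < `|m| + 1 by rewrite ltr_pwDr.
have e1 : 0 < e / 2 by rewrite divr_gt0.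
have e2 : 0 < e / 2 / (`|m| + 1) by rewrite divr_gt0.
have [d1 d10 hd1] := h1 _ e1; have [d2 d20 hd2] := h2 _ e2.
exists (Num.min d1 d2); first by rewrite lt_min d10.
move=> y Sy; rewrite lt_min => /andP[hy1 hy2].
have k1 := hd1 _ Sy hy1; have k2 := hd2 _ Sy hy2.
set nh := enorm (y - x) in k1 k2 *.
set r1 := f1 y - f1 x - dotv g1 (y - x) in k1.
set r2 := f2 y - f2 x - dotv g2 (y - x) in k2.
have -> : f1 y - m * f2 y - (f1 x - m * f2 x) - dotv (g1 - m *: g2) (y - x)
   = r1 - m * r2 by rewrite dotvBl dotvZl /r1 /r2; lra.
apply: le_trans (ler_normB _ _) _; rewrite normrM.
have : `|m| * `|r2| <= `|m| * (e / 2 / (`|m| + 1) * nh) by rewrite ler_wpM2l.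
have : `|m| * (e / 2 / (`|m| + 1) * nh) <= e / 2 * nh.
  have nh0 : 0 <= nh by exact: enorm_ge0.
  have hq : e / 2 / (`|m| + 1) * (`|m| + 1) = e / 2 by rewrite divfK // gt_eqF.
  have hq0 : 0 <= e / 2 / (`|m| + 1) * nh by rewrite mulr_ge0 // ltW.
  rewrite -[X in _ <= X * nh]hq; lra.
lra.
Qed.

Lemma bregman_strongly_convex S (psi : 'rV[R]_n -> R) (gpsi : 'rV[R]_n -> 'rV[R]_n)
    (rho : R) x y :
  convexS S -> S x -> S y -> 0 < rho -> strongly_convex_on S psi rho ->
  has_grad_within S psi (gpsi y) y ->
  rho / 2 * sqnorm (x - y) <= bregman psi gpsi x y.
Proof.
move=> cS Sx Sy r0 sc hg; rewrite leNgt; apply/negP => hgap.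
set s := sqnorm (x - y) in hgap; set D := bregman psi gpsi x y in hgap.
set gap := rho / 2 * s - D; set nh := enorm (x - y).
have gap0 : 0 < gap by rewrite /gap; lra.
have nh0 : 0 <= nh by exact: enorm_ge0.
have s0 : 0 <= s by exact: sqnorm_ge0.
have rs0 : 0 < rho * s + 1 by rewrite ltr_pwDr // mulr_ge0 // ltW.
have e0 : 0 < gap / (4 * (nh + 1)) by rewrite divr_gt0 // mulr_gt0 // ltr_pwDr.
have [delta d0 hd] := hg _ e0.
set l := Num.min (Num.min 1 (delta / (nh + 1))) (gap / (rho * s + 1)).
have l0 : 0 < l by rewrite !lt_min ltr01 !divr_gt0 // ltr_pwDr.
have l01 : 0 <= l <= 1 by rewrite ltW //= !ge_min lexx.
have l_gap : l <= gap / (rho * s + 1) by rewrite !ge_min lexx !orbT.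
have in_ball : l * nh < delta by apply: small_step_in_ball; rewrite // !ge_min lexx orbT.
have := hd _ (cS x y Sx Sy l l01).
rewrite convex_comb_subr (enormZ _ _ (ltW l0)) dotvZr -/nh => /(_ in_ball).
rewrite ler_norml => /andP[lin _].
have hs := sc x y Sx Sy l l01; rewrite -/s in hs.
(* Strong convexity along [y, x] and the linear model of psi at y give,
   after dividing by l, the lower bound below; both error terms are small. *)
have key : 0 <= D - rho / 2 * s + rho / 2 * l * s + gap / (4 * (nh + 1)) * nh.
  rewrite -(pmulr_rge0 _ l0) /D /bregman; lra.
have err_grad : gap / (4 * (nh + 1)) * nh <= gap / 4.
  have hq : gap / (4 * (nh + 1)) * (4 * (nh + 1)) = gap.
    by rewrite divfK // gt_eqF // mulr_gt0 // ltr_pwDr.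
  have hq0 : 0 <= gap / (4 * (nh + 1)) by rewrite ltW.
  rewrite -[X in _ <= X / 4]hq; lra.
have err_curv : rho / 2 * l * s <= gap / 2.
  have hq : gap / (rho * s + 1) * (rho * s + 1) = gap by rewrite divfK // gt_eqF.
  have hq0 : 0 <= gap / (rho * s + 1) by rewrite ltW // divr_gt0.
  have : rho * s * l <= rho * s * (gap / (rho * s + 1)).
    by rewrite ler_wpM2l // mulr_ge0 // ltW.
  rewrite -[X in _ <= X / 2]hq; lra.
move: err_grad err_curv key gap0; rewrite /gap; lra.
Qed.

End Calculus.

Lemma perturbation_gradient_gap {R : realType} {n : nat} (G : 'rV[R]_n -> R)
    (gradG : 'rV[R]_n -> 'rV[R]_n) (D : 'rV[R]_n -> 'rV[R]_n -> R)
    (beta gamma : R) (p q xs : 'rV[R]_n) :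
  G q - G p - dotv (gradG p) (q - p) <= beta * D q p ->
  gamma * D q xs <= G q - G xs - dotv (gradG xs) (q - xs) ->
  gamma * D xs p <= G xs - G p - dotv (gradG p) (xs - p) ->
  dotv (gradG xs - gradG p) (q - xs) <= beta * D q p - gamma * D q xs - gamma * D xs p.
Proof. by rewrite !dotvE; lra. Qed.

Section PlayerDescent.
Context {R : realType} {n : nat}.
Variables (psi : 'rV[R]_n -> R) (gpsi : 'rV[R]_n -> 'rV[R]_n).
Local Notation D := (bregman psi gpsi).

(* One player's descent inequality for a mirror step from p to q along the
   gradient a - mu b, measured against a point xs solving the variational
   inequality of the perturbed game (with gradient astar - mu bstar there). *)
Lemma player_descent (beta gamma mu eta : R) (a astar b bstar p q xs : 'rV[R]_n) :
  0 <= eta -> 0 <= mu ->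
  dotv (eta *: (a - mu *: b) + gpsi p - gpsi q) (xs - q) <= 0 ->
  dotv (astar - mu *: bstar) (q - xs) <= 0 ->
  dotv (bstar - b) (q - xs) <= beta * D q p - gamma * D q xs - gamma * D xs p ->
  D xs q <= D xs p - D q p + eta * (dotv (a - astar) (p - xs) + dotv (a - astar) (q - p))
            + eta * mu * beta * D q p - eta * mu * gamma * D xs p
            - eta * mu * gamma * D q xs.
Proof.
move=> eta0 mu0 step_vi eq_vi gap; rewrite (bregman_three_point _ _ _ p).
have eq_vi' := mulr_ge0_le0 eta0 eq_vi.
have gap' := ler_wpM2l (mulr_ge0 eta0 mu0) gap.
by move: step_vi eq_vi' gap'; rewrite !dotvE; lra.
Qed.

End PlayerDescent.

Lemma ler_sum_affine {R : realType} {N : nat} {Dn Dt Ds E M Y : 'I_N -> R} {a b e : R} :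
  (forall i, Dn i <= Dt i - Ds i + e * (M i + Y i) + a * Ds i - b * Dt i - b * E i) ->
  \sum_(i < N) Dn i <= \sum_(i < N) Dt i - \sum_(i < N) Ds i
    + e * (\sum_(i < N) M i + \sum_(i < N) Y i) + a * \sum_(i < N) Ds i
    - b * \sum_(i < N) Dt i - b * \sum_(i < N) E i.
Proof.
move=> h; apply: le_trans (ler_sum _ (fun i _ => h i)) _.
by rewrite !sumrB !big_split /= -!mulr_sumr big_split /= sumrN.
Qed.

(* The step-size condition of the theorem, in the polynomial form used in
   the contraction argument. *)
Lemma learning_rate_bound {R : realType} {L rho beta gamma mu eta : R} :
  0 < rho -> 0 < beta -> 0 < gamma -> 0 < mu -> 0 < eta ->
  eta < 2 * mu * gamma * rho ^+ 2
        / (mu ^+ 2 * gamma * rho ^+ 2 * (gamma + 2 * beta) + 8 * L ^+ 2) ->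
  eta * (4 * L ^+ 2 + mu ^+ 2 * gamma ^+ 2 * rho ^+ 2
         + 2 * mu ^+ 2 * beta * gamma * rho ^+ 2) <= 2 * mu * gamma * rho ^+ 2.
Proof.
move=> r0 b0 g0 m0 e0.
have L2 := sqr_ge0 L.
have pos : 0 < mu ^+ 2 * gamma * rho ^+ 2 * (gamma + 2 * beta).
  by apply: mulr_gt0; [rewrite !mulr_gt0 ?exprn_gt0 | lra].
rewrite ltr_pdivlMr; last by lra.
move=> rate; apply: le_trans (ltW rate).
by apply: ler_wpM2l; [exact: ltW | lra].
Qed.

Lemma contraction_factor_ge0 {R : realType} {L rho beta gamma mu eta : R} :
  0 < rho -> 0 < beta -> 0 < gamma -> 0 < mu -> 0 < eta ->
  eta * (4 * L ^+ 2 + mu ^+ 2 * gamma ^+ 2 * rho ^+ 2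
         + 2 * mu ^+ 2 * beta * gamma * rho ^+ 2) <= 2 * mu * gamma * rho ^+ 2 ->
  0 <= 1 - eta * mu * gamma / 2.
Proof.
move=> r0 b0 g0 m0 e0 rate.
have mgr : 0 < mu * gamma * rho ^+ 2 by rewrite !mulr_gt0 // exprn_gt0.
suff : eta * mu * gamma <= 2 by lra.
rewrite -(ler_pM2r mgr).
have -> : eta * mu * gamma * (mu * gamma * rho ^+ 2)
        = eta * (mu ^+ 2 * gamma ^+ 2 * rho ^+ 2) by ring.
have : 0 <= eta * (4 * L ^+ 2 + 2 * mu ^+ 2 * beta * gamma * rho ^+ 2).
  have := sqr_ge0 L; have : 0 <= mu ^+ 2 * beta * gamma * rho ^+ 2.
    by rewrite !mulr_ge0 ?sqr_ge0 ?ltW.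
  by move=> *; apply: mulr_ge0; lra.
by move: rate; lra.
Qed.

(* Scalar core of the convergence proof: the descent inequality for
   Dn = D(pi*, pi^{t+1}), Dt = D(pi*, pi^t), Ds = D(pi^{t+1}, pi^t) with
   coupling term Y, plus the Young/smoothness bound on Y (with weights
   P = 2 mu gamma rho and Q = 4 L^2 + mu^2 gamma^2 rho^2), give a contraction. *)
Lemma contraction_scalar {R : realType} {L rho beta gamma mu eta Dn Dt Ds Y : R} :
  0 < rho -> 0 < gamma -> 0 < mu -> 0 < eta ->
  eta * (4 * L ^+ 2 + mu ^+ 2 * gamma ^+ 2 * rho ^+ 2
         + 2 * mu ^+ 2 * beta * gamma * rho ^+ 2) <= 2 * mu * gamma * rho ^+ 2 ->
  0 <= Dt -> 0 <= Ds ->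
  Dn <= Dt - Ds + eta * Y + eta * mu * beta * Ds - eta * mu * gamma * Dt ->
  rho * ((2 * mu * gamma * rho) * (4 * L ^+ 2 + mu ^+ 2 * gamma ^+ 2 * rho ^+ 2)) * Y
    <= (2 * mu * gamma * rho) ^+ 2 * L ^+ 2 * Dt
       + (4 * L ^+ 2 + mu ^+ 2 * gamma ^+ 2 * rho ^+ 2) ^+ 2 * Ds ->
  Dn <= (1 - eta * mu * gamma / 2) * Dt.
Proof.
move=> r0 g0 m0 e0 rate Dt0 Ds0 descent coupling.
move: rate coupling; set P := 2 * mu * gamma * rho; set Q := 4 * L ^+ 2 + _.
move=> rate coupling.
have P0 : 0 < P by rewrite !mulr_gt0.
have Q0 : 0 < Q.
  have := sqr_ge0 L; have : 0 < mu ^+ 2 * gamma ^+ 2 * rho ^+ 2.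
    by rewrite !mulr_gt0 ?exprn_gt0.
  by rewrite /Q; lra.
set K := rho * (P * Q) in coupling.
have K0 : 0 < K by rewrite !mulr_gt0.
(* Smoothness costs at most half of the contraction eta mu gamma ... *)
have coef_Dt : eta * (P ^+ 2 * L ^+ 2) * Dt <= K * (eta * mu * gamma / 2) * Dt.
  rewrite -subr_ge0.
  have -> : K * (eta * mu * gamma / 2) * Dt - eta * (P ^+ 2 * L ^+ 2) * Dt
          = eta * P * ((mu * gamma * rho) ^+ 3 / 2) * Dt.
    by rewrite /K /P /Q; field.
  have mgr : 0 <= (mu * gamma * rho) ^+ 3 / 2 by rewrite divr_ge0 ?exprn_ge0 ?mulr_ge0 ?ltW.
  by rewrite mulr_ge0 // mulr_ge0 // mulr_ge0 ?ltW.
(* ... and the step size makes the Ds terms nonpositive. *)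
have coef_Ds : eta * Q ^+ 2 * Ds <= K * (1 - eta * mu * beta) * Ds.
  rewrite -subr_ge0.
  have -> : K * (1 - eta * mu * beta) * Ds - eta * Q ^+ 2 * Ds
     = Q * (2 * mu * gamma * rho ^+ 2
            - eta * (Q + 2 * mu ^+ 2 * beta * gamma * rho ^+ 2)) * Ds.
    by rewrite /K /P; ring.
  by rewrite mulr_ge0 //; apply: mulr_ge0; [exact: ltW | rewrite subr_ge0].
have scaled := ler_wpM2l (ltW K0) descent.
have coupling' := ler_wpM2l (ltW e0) coupling.
suff : K * Dn <= K * ((1 - eta * mu * gamma / 2) * Dt) by rewrite ler_pM2l.
by move: scaled coupling' coef_Dt coef_Ds; lra.
Qed.

Lemma geometric_decay {R : realType} {a : nat -> R} {c : R} :
  0 <= c -> (forall t, a t.+1 <= c * a t) -> forall t, a t <= a 0%N * c ^+ t.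
Proof.
move=> c0 step; elim=> [|t IH]; first by rewrite expr0 mulr1.
by apply: le_trans (step t) _; rewrite exprS mulrCA ler_wpM2l.
Qed.

Section MirrorDescentStep.
Context {R : realType} {N : nat} {d : 'I_N -> nat}.
Context {X : forall i : 'I_N, set 'rV[R]_(d i)} {v : 'I_N -> @profile R N d -> R}
  {gradv : forall i : 'I_N, @profile R N d -> 'rV[R]_(d i)}
  {psi : forall i : 'I_N, 'rV[R]_(d i) -> R}
  {gpsi : forall i : 'I_N, 'rV[R]_(d i) -> 'rV[R]_(d i)}
  {G : forall i : 'I_N, 'rV[R]_(d i) -> 'rV[R]_(d i) -> R}
  {gradG : forall i : 'I_N, 'rV[R]_(d i) -> 'rV[R]_(d i) -> 'rV[R]_(d i)}
  {L rho beta gamma mu eta : R} {sigma pstar : @profile R N d}.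

(* The hypotheses of Theorem 4 that the one-step estimate uses; the
   step-size condition is taken in the polynomial form of
   [learning_rate_bound]. *)
Hypothesis convX : forall i, convexS (X i).
Hypothesis grad_v : forall p : @profile R N d, in_profile X p -> forall i,
  has_grad_within (X i) (fun x => v i (upd p i x)) (gradv i p) (p i).
Hypothesis monotone : forall p q : @profile R N d, in_profile X p -> in_profile X q ->
  \sum_(i < N) dotv (gradv i p - gradv i q) (p i - q i) <= 0.
Hypothesis smooth : forall p q : @profile R N d, in_profile X p -> in_profile X q ->
  \sum_(i < N) sqnorm (gradv i p - gradv i q) <= L ^+ 2 * \sum_(i < N) sqnorm (p i - q i).
Hypothesis rho_gt0 : 0 < rho.
Hypothesis grad_psi : forall i x, X i x -> has_grad_within (X i) (psi i) (gpsi i x) x.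
Hypothesis psi_strongly_convex : forall i, strongly_convex_on (X i) (psi i) rho.
Hypothesis grad_G : forall i s x, X i s -> X i x ->
  has_grad_within (X i) (fun y => G i y s) (gradG i x s) x.
Hypothesis gamma_gt0 : 0 < gamma.
Hypothesis assumptionA : forall i s x x', X i s -> X i x -> X i x' ->
  gamma * bregman (psi i) (gpsi i) x' x
    <= G i x' s - G i x s - dotv (gradG i x s) (x' - x)
  /\ G i x' s - G i x s - dotv (gradG i x s) (x' - x)
    <= beta * bregman (psi i) (gpsi i) x' x.
Hypothesis mu_gt0 : 0 < mu.
Hypotheses (sigmaX : in_profile X sigma) (pstarX : in_profile X pstar).
Hypothesis equilibrium : forall i, is_maximizer (X i)
  (fun x => v i (upd pstar i x) - mu * G i x (sigma i)) (pstar i).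
Hypothesis eta_gt0 : 0 < eta.
Hypothesis rate : eta * (4 * L ^+ 2 + mu ^+ 2 * gamma ^+ 2 * rho ^+ 2
  + 2 * mu ^+ 2 * beta * gamma * rho ^+ 2) <= 2 * mu * gamma * rho ^+ 2.

Local Notation D i := (bregman (psi i) (gpsi i)).

Local Notation mdsp_update p q := (forall i, is_maximizer (X i)
  (fun x => eta * dotv (gradv i p - mu *: gradG i (p i) (sigma i)) x
            - bregman (psi i) (gpsi i) x (p i)) (q i)).

Lemma equilibrium_vi {i x} : X i x ->
  dotv (gradv i pstar - mu *: gradG i (pstar i) (sigma i)) (x - pstar i) <= 0.
Proof.
move=> Xx; apply: maximizer_first_order (convX i) (equilibrium i) _ x Xx.
exact: grad_sub_scale (grad_v _ pstarX i) (grad_G _ _ _ (sigmaX i) (pstarX i)).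
Qed.

Lemma mdsp_vi {p q : @profile R N d} : mdsp_update p q -> forall i,
  dotv (eta *: (gradv i p - mu *: gradG i (p i) (sigma i)) + gpsi i (p i) - gpsi i (q i))
       (pstar i - q i) <= 0.
Proof.
move=> step i; have [Xq _] := step i.
apply: maximizer_first_order (convX i) (step i) _ _ (pstarX i).
apply: (@grad_affine_sub _ _ _ _ _ _ _ (psi i (p i) - dotv (gpsi i (p i)) (p i)))
  (grad_psi _ _ Xq) _ => y /=.
by rewrite /bregman !dotvE; lra.
Qed.

Lemma player_step {p q : @profile R N d} : in_profile X p -> mdsp_update p q -> forall i,
  D i (pstar i) (q i) <= D i (pstar i) (p i) - D i (q i) (p i)
    + eta * (dotv (gradv i p - gradv i pstar) (p i - pstar i)
             + dotv (gradv i p - gradv i pstar) (q i - p i))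
    + eta * mu * beta * D i (q i) (p i) - eta * mu * gamma * D i (pstar i) (p i)
    - eta * mu * gamma * D i (q i) (pstar i).
Proof.
move=> Xp step i; have [Xq _] := step i.
apply: player_descent.
- exact: ltW.
- exact: ltW.
- exact: mdsp_vi step i.
- exact: equilibrium_vi Xq.
apply: (perturbation_gradient_gap (fun y => G i y (sigma i))
  (fun x => gradG i x (sigma i)) (D i)).
- exact: (assumptionA _ _ _ _ (sigmaX i) (Xp i) Xq).2.
- exact: (assumptionA _ _ _ _ (sigmaX i) (pstarX i) Xq).1.
- exact: (assumptionA _ _ _ _ (sigmaX i) (Xp i) (pstarX i)).1.
Qed.

(* Strong convexity of psi, summed over the players. *)
Lemma bregman_prof_lower {p q : @profile R N d} : in_profile X p -> in_profile X q ->
  rho / 2 * \sum_(i < N) sqnorm (p i - q i) <= bregman_prof psi gpsi p q.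
Proof.
move=> Xp Xq; rewrite mulr_sumr; apply: ler_sum => i _.
exact: bregman_strongly_convex (convX i) (Xp i) (Xq i) rho_gt0
  (psi_strongly_convex i) (grad_psi _ _ (Xq i)).
Qed.

Lemma bregman_prof_ge0 {p q : @profile R N d} : in_profile X p -> in_profile X q ->
  0 <= bregman_prof psi gpsi p q.
Proof.
move=> Xp Xq; apply: le_trans _ (bregman_prof_lower Xp Xq).
apply: mulr_ge0; first by rewrite divr_ge0 ?ltW.
by apply: sumr_ge0 => i _; exact: sqnorm_ge0.
Qed.

(* The coupling term left after monotonicity is controlled by Young's
   inequality (weights P = 2 mu gamma rho, Q = 4 L^2 + mu^2 gamma^2 rho^2),
   L-smoothness and strong convexity. *)
Lemma coupling_bound {p q : @profile R N d} : in_profile X p -> in_profile X q ->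
  rho * ((2 * mu * gamma * rho) * (4 * L ^+ 2 + mu ^+ 2 * gamma ^+ 2 * rho ^+ 2))
      * \sum_(i < N) dotv (gradv i p - gradv i pstar) (q i - p i)
    <= (2 * mu * gamma * rho) ^+ 2 * L ^+ 2 * bregman_prof psi gpsi pstar p
       + (4 * L ^+ 2 + mu ^+ 2 * gamma ^+ 2 * rho ^+ 2) ^+ 2 * bregman_prof psi gpsi q p.
Proof.
move=> Xp Xq; set P := 2 * mu * gamma * rho; set Q := 4 * L ^+ 2 + _.
set A := \sum_(i < N) sqnorm (gradv i p - gradv i pstar).
set B := \sum_(i < N) sqnorm (q i - p i).
set C := \sum_(i < N) sqnorm (p i - pstar i).
have young : 2 * P * Q * \sum_(i < N) dotv (gradv i p - gradv i pstar) (q i - p i)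
    <= P ^+ 2 * A + Q ^+ 2 * B.
  by rewrite !mulr_sumr -big_split; apply: ler_sum => i _; exact: young_dotv.
have r2 : 0 <= rho / 2 by rewrite divr_ge0 ?ltW.
have smoothA : rho / 2 * P ^+ 2 * A <= rho / 2 * P ^+ 2 * (L ^+ 2 * C).
  by apply: ler_wpM2l; [rewrite mulr_ge0 ?sqr_ge0 | exact: smooth].
have lowerC : P ^+ 2 * L ^+ 2 * (rho / 2 * C)
    <= P ^+ 2 * L ^+ 2 * bregman_prof psi gpsi pstar p.
  apply: ler_wpM2l; first by rewrite mulr_ge0 ?sqr_ge0.
  rewrite /C (eq_bigr _ (fun i _ => sqnormBC (p i) (pstar i))).
  exact: bregman_prof_lower.
have lowerB : Q ^+ 2 * (rho / 2 * B) <= Q ^+ 2 * bregman_prof psi gpsi q p.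
  by apply: ler_wpM2l; [exact: sqr_ge0 | exact: bregman_prof_lower].
have young' := ler_wpM2l r2 young.
by move: young' smoothA lowerC lowerB; lra.
Qed.

Lemma mdsp_contraction {p q : @profile R N d} : in_profile X p -> mdsp_update p q ->
  bregman_prof psi gpsi pstar q
    <= (1 - eta * mu * gamma / 2) * bregman_prof psi gpsi pstar p.
Proof.
move=> Xp step; have Xq : in_profile X q by move=> i; case: (step i).
have descent : bregman_prof psi gpsi pstar q <= bregman_prof psi gpsi pstar p
    - bregman_prof psi gpsi q p
    + eta * \sum_(i < N) dotv (gradv i p - gradv i pstar) (q i - p i)
    + eta * mu * beta * bregman_prof psi gpsi q p
    - eta * mu * gamma * bregman_prof psi gpsi pstar p.
  have mono := mulr_ge0_le0 (ltW eta_gt0) (monotone _ _ Xp pstarX).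
  have E0 : 0 <= eta * mu * gamma * bregman_prof psi gpsi q pstar.
    by rewrite mulr_ge0 ?bregman_prof_ge0 // !mulr_ge0 ?ltW.
  move: (ler_sum_affine (player_step Xp step)) mono E0.
  by rewrite /bregman_prof; lra.
exact: contraction_scalar rho_gt0 gamma_gt0 mu_gt0 eta_gt0 rate
  (bregman_prof_ge0 pstarX Xp) (bregman_prof_ge0 Xq Xp) descent (coupling_bound Xp Xq).
Qed.

End MirrorDescentStep.

Theorem theorem4 (R : realType) (N : nat) (d : 'I_N -> nat)
  (X : forall i : 'I_N, set 'rV[R]_(d i))
  (v : 'I_N -> profile d -> R)
  (gradv : forall i : 'I_N, profile d -> 'rV[R]_(d i))
  (psi : forall i : 'I_N, 'rV[R]_(d i) -> R)
  (gpsi : forall i : 'I_N, 'rV[R]_(d i) -> 'rV[R]_(d i))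
  (G : forall i : 'I_N, 'rV[R]_(d i) -> 'rV[R]_(d i) -> R)
  (gradG : forall i : 'I_N, 'rV[R]_(d i) -> 'rV[R]_(d i) -> 'rV[R]_(d i))
  (L rho beta gamma mu eta : R)
  (sigma pstar : profile d) (pi : nat -> profile d) :
  (* strategy sets: nonempty, compact, convex *)
  (forall i, X i !=set0) ->
  (forall i, compactS (X i)) ->
  (forall i, convexS (X i)) ->
  (* gradv i is the block gradient of v_i w.r.t. pi_i *)
  (forall p : profile d, in_profile X p -> forall i,
      has_grad_within (X i) (fun x => v i (upd p i x)) (gradv i p) (p i)) ->
  (* monotone game *)
  (forall p q : profile d, in_profile X p -> in_profile X q ->
      \sum_(i < N) dotv (gradv i p - gradv i q) (p i - q i) <= 0) ->
  (* L-smooth game *)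
  (forall p q : profile d, in_profile X p -> in_profile X q ->
      \sum_(i < N) sqnorm (gradv i p - gradv i q)
        <= L ^+ 2 * \sum_(i < N) sqnorm (p i - q i)) ->
  (* regularizer: differentiable, rho-strongly convex *)
  0 < rho ->
  (forall i x, X i x -> has_grad_within (X i) (psi i) (gpsi i x) x) ->
  (forall i, strongly_convex_on (X i) (psi i) rho) ->
  (* perturbation G *)
  (forall i x s, X i x -> X i s -> 0 <= G i x s) ->
  (forall i s, X i s -> G i s s = 0) ->
  (forall i s, X i s -> strictly_convex_on (X i) (fun x => G i x s)) ->
  (forall i s x, X i s -> X i x ->
      has_grad_within (X i) (fun y => G i y s) (gradG i x s) x) ->
  (* Assumption A with beta, gamma in (0, oo) *)
  0 < beta -> 0 < gamma ->
  (forall i s x x', X i s -> X i x -> X i x' ->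
      gamma * bregman (psi i) (gpsi i) x' x
        <= G i x' s - G i x s - dotv (gradG i x s) (x' - x)
      /\ G i x' s - G i x s - dotv (gradG i x s) (x' - x)
        <= beta * bregman (psi i) (gpsi i) x' x) ->
  (* perturbed equilibrium pi^{mu,sigma} *)
  0 < mu ->
  in_profile X sigma ->
  in_profile X pstar ->
  (forall i, is_maximizer (X i)
      (fun x => v i (upd pstar i x) - mu * G i x (sigma i)) (pstar i)) ->
  (* learning rate *)
  0 < eta ->
  eta < 2 * mu * gamma * rho ^+ 2
        / (mu ^+ 2 * gamma * rho ^+ 2 * (gamma + 2 * beta) + 8 * L ^+ 2) ->
  (* MD-SP with full feedback *)
  in_profile X (pi 0%N) ->
  (forall (t : nat) (i : 'I_N), is_maximizer (X i)
      (fun x => eta * dotv (gradv i (pi t) - mu *: gradG i (pi t i) (sigma i)) x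
                - bregman (psi i) (gpsi i) x (pi t i))
      (pi t.+1 i)) ->
  forall t : nat, (1 <= t)%N ->
    bregman_prof psi gpsi pstar (pi t)
      <= bregman_prof psi gpsi pstar (pi 0%N) * (1 - eta * mu * gamma / 2) ^+ t.
Proof.
move=> _ _ convX grad_v monotone smooth rho_gt0 grad_psi psi_sc _ _ _ grad_G
  beta_gt0 gamma_gt0 assumptionA mu_gt0 sigmaX pstarX equilibrium eta_gt0 eta_small
  pi0X mdsp t _.
have rate := learning_rate_bound rho_gt0 beta_gt0 gamma_gt0 mu_gt0 eta_gt0 eta_small.
have piX : forall s, in_profile X (pi s) by case=> // s i; case: (mdsp s i).
apply: (geometric_decay (a := fun s => bregman_prof psi gpsi pstar (pi s))).
  exact: contraction_factor_ge0 rho_gt0 beta_gt0 gamma_gt0 mu_gt0 eta_gt0 rate.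
move=> s /=; exact: mdsp_contraction convX grad_v monotone smooth rho_gt0 grad_psi
  psi_sc grad_G gamma_gt0 assumptionA mu_gt0 sigmaX pstarX equilibrium eta_gt0
  rate _ _ (piX s) (mdsp s).
Qed.
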